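(* For all integers $n\ge2$ and $m\ge1$, \[ \mathrm{pw}(K_n\wedge K_m)=n+\max\!\left(0,\ m-\left\lfloor \tfrac n2\right\rfloor\right)-1. \]
   Context: Graphs are finite, simple and undirected. $K_n$ is the complete graph on $n$ vertices. The corona $G_1\wedge G_2$ is the graph obtained from the disjoint union of one copy of $G_1$ and $|V(G_1)|$ copies of $G_2$, one copy $G_2^{(x)}$ for each $x\in V(G_1)$, by joining each vertex $x$ of $G_1$ to all vertices of its copy $G_2^{(x)}$. $\mathrm{pw}$ denotes path-width (minimum over path-decompositions of the maximum bag size minus one). *)

From mathcomp Require Import all_boot.
Set Implicit Arguments. Unset Strict Implicit. Unset Printing Implicit Defensive.

(* A finite simple graph is given by a symmetric irreflexive relation on a finType. *)

Definition complete_rel (n : nat) : rel 'I_n := fun x y => x != y.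
Arguments complete_rel n : clear implicits.

(* Corona G1 /\ G2: vertex set V1 + (V1 * V2); the pair (x, y) is the copy of y
   in the copy G2^(x).  Edges: edges of G1; edges inside each copy of G2;
   x joined to every vertex of its copy G2^(x). *)
Definition corona_rel (V1 V2 : finType) (e1 : rel V1) (e2 : rel V2) :
  rel (V1 + V1 * V2)%type :=
  fun a b =>
    match a, b with
    | inl x, inl y => e1 x y
    | inl x, inr (x', _) => x == x'
    | inr (x', _), inl x => x == x'
    | inr (x, u), inr (y, v) => (x == y) && e2 u v
    end.

Definition path_decomposition (V : finType) (e : rel V) (s : seq {set V}) : Prop :=
  [/\ forall v : V, exists2 B, B \in s & v \in B,
      forall u v : V, e u v -> exists2 B, B \in s & (u \in B) && (v \in B)
    & forall (v : V) (i j k : nat), i <= j -> j <= k -> k < size s ->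
        v \in nth set0 s i -> v \in nth set0 s k -> v \in nth set0 s j].

Definition pd_width (V : finType) (s : seq {set V}) : nat :=
  (\max_(B <- s) #|B|).-1.

Definition is_pathwidth (V : finType) (e : rel V) (k : nat) : Prop :=
  (exists2 s, path_decomposition e s & pd_width s = k) /\
  (forall s, path_decomposition e s -> k <= pd_width s).

From mathcomp Require Import all_boot zify.
Set Implicit Arguments. Unset Strict Implicit. Unset Printing Implicit Defensive.

(* Lower bound: the bags containing a vertex form an interval, so every clique
   lies in a single bag (Helly property of intervals).  Hence some bag p holds
   the whole core K_n, and each core vertex i together with its copy of K_m lies
   in some bag q_i.  At least n - n/2 of the q_i are on the same side of p; the
   one of them closest to p also holds, by convexity, all the corresponding core
   vertices, so it has at least n - n/2 + m vertices, while bag p has n.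
   Upper bound: put the copy of K_m at core vertex i alone in bag slot i, the
   slots avoiding a hub bag n/2, and let i occupy every bag between its slot and
   the hub; a bag other than the hub then meets at most n - n/2 core vertices
   and one copy of K_m. *)

Lemma card_set_sum (T1 T2 : finType) (A : {set T1 + T2}) :
  #|A| = #|[set x | inl x \in A]| + #|[set y | inr y \in A]|.
Proof.
rewrite -!sum1_card (big_mkcond (fun v => v \in A)) big_sumType /=.
rewrite [in RHS]big_mkcond [X in _ = _ + X]big_mkcond.
by congr (_ + _); apply: eq_bigr => ? _; rewrite inE.
Qed.

Lemma card_ord_range n (A : {set 'I_n}) a b :
  (forall x : 'I_n, x \in A -> a <= x < b) -> #|A| <= b - a.
Proof.
move=> inA; rewrite cardE -(size_map val) -(size_iota a (b - a)).
apply: uniq_leq_size; first by rewrite (map_inj_uniq val_inj) enum_uniq.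
move=> y /mapP[x]; rewrite mem_enum => /inA x_range ->; rewrite mem_iota /=; lia.
Qed.

Section PathDecomposition.
Variables (V : finType) (e : rel V) (s : seq {set V}).
Hypothesis pd : path_decomposition e s.

Lemma bag_index_lt_size v i : v \in nth set0 s i -> i < size s.
Proof. by rewrite ltnNge; apply: contraL => /(nth_default set0)->; rewrite inE. Qed.

Lemma pd_convex v a b t :
  v \in nth set0 s a -> v \in nth set0 s b -> minn a b <= t <= maxn a b ->
  v \in nth set0 s t.
Proof.
case: pd => _ _ conv va vb /andP[lo hi].
have [a_le_b|b_lt_a] := leqP a b.
- by apply: (conv v a t b) => //; [lia | lia | exact: bag_index_lt_size vb].
- by apply: (conv v b t a) => //; [lia | lia | exact: bag_index_lt_size va].
Qed.

Definition first_bag (v : V) : nat := find (fun B : {set V} => v \in B) s.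

Lemma first_bagP v : v \in nth set0 s (first_bag v).
Proof.
case: pd => cover _ _; have [B Bs vB] := cover v.
by apply: (nth_find set0 (a := fun B : {set V} => v \in B)); apply/hasP; exists B.
Qed.

Lemma first_bag_min v i : v \in nth set0 s i -> first_bag v <= i.
Proof.
move=> vi; rewrite leqNgt; apply/negP => lt_i.
by have := before_find set0 lt_i; rewrite vi.
Qed.

Lemma pd_clique_sub_bag (K : {set V}) u0 :
  u0 \in K -> {in K &, forall u v, u != v -> e u v} ->
  exists2 p, p < size s & K \subset nth set0 s p.
Proof.
move=> Ku0 clique.
have [u Ku u_last] := @arg_maxnP _ u0 (mem K) first_bag Ku0.
exists (first_bag u); first exact: bag_index_lt_size (first_bagP u).
apply/subsetP => v Kv; have [->|vu] := eqVneq v u; first exact: first_bagP.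
have [B Bs /andP[uB vB]] : exists2 B, B \in s & (u \in B) && (v \in B).
  by case: pd => _ edge _; apply/edge/clique; rewrite // eq_sym.
have [j _ defB] := nthP set0 Bs; rewrite -defB in uB vB.
apply: pd_convex (first_bagP v) vB _.
by have := u_last v Kv; have := first_bag_min uB; lia.
Qed.

End PathDecomposition.

Lemma card_bag_le_pd_width (V : finType) (s : seq {set V}) B :
  B \in s -> #|B|.-1 <= pd_width s.
Proof.
move=> Bs; rewrite /pd_width -!subn1 leq_sub2r //.
exact: (leq_bigmax_seq (F := fun B : {set V} => #|B|)).
Qed.

Section Corona.
Variables n m : nat.
Notation V := ('I_n + 'I_n * 'I_m)%type.
Notation corona := (corona_rel (complete_rel n) (complete_rel m)).

Definition core : {set V} := [set v | if v is inl _ then true else false].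

Definition hair (i : 'I_n) : {set V} :=
  [set v : V | if v is inr (x, _) then x == i else v == inl i].

Lemma core_clique : {in core &, forall u v, u != v -> corona u v}.
Proof. by move=> [x|?] [y|?]; rewrite !inE. Qed.

Lemma hair_clique i : {in hair i &, forall u v, u != v -> corona u v}.
Proof.
move=> [x|[x a]] [y|[y b]]; rewrite !inE => /eqP-> /eqP->; rewrite //= eqxx //.
by apply: contra => /eqP->.
Qed.

Lemma card_hair_inr (B : {set V}) i :
  hair i \subset B -> m <= #|[set y | inr y \in B]|.
Proof.
move=> /subsetP hairB; apply: (@leq_trans #|[set (i, a) | a : 'I_m]|).
  by rewrite card_imset ?card_ord // => a b [].
apply/subset_leq_card/subsetP => _ /imsetP[a _ ->]; rewrite inE.
by apply: hairB; rewrite inE.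
Qed.

Section LowerBound.
Variables (s : seq {set V}) (p : nat) (q : 'I_n -> nat).
Hypotheses (pd : path_decomposition corona s)
  (core_in_p : core \subset nth set0 s p)
  (hair_in_q : forall i, hair i \subset nth set0 s (q i)).

Lemma big_bag_between (S : {set 'I_n}) i :
  i \in S -> {in S, forall j, minn (q j) p <= q i <= maxn (q j) p} ->
  #|S| + m <= #|nth set0 s (q i)|.
Proof.
move=> Si between; rewrite card_set_sum leq_add ?(card_hair_inr (hair_in_q i)) //.
apply/subset_leq_card/subsetP => j Sj; rewrite inE.
have j_core : inl j \in nth set0 s p by apply: (subsetP core_in_p); rewrite inE.
have j_hair : inl j \in nth set0 s (q j) by apply: (subsetP (hair_in_q j)); rewrite inE.
by have := pd_convex pd j_hair j_core (between j Sj).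
Qed.

Lemma big_bag_one_side : 0 < n ->
  exists2 B, B \in s & n - n./2 + m <= #|B|.
Proof.
move=> n_gt0; have bag_q_in_s i : nth set0 s (q i) \in s.
  apply/mem_nth/(bag_index_lt_size (v := inl i)).
  by apply: (subsetP (hair_in_q i)); rewrite inE.
have half_le k : n <= k.*2 -> n - n./2 <= k by rewrite -divn2 -muln2; lia.
pose S := [set i | q i <= p]; pose T := [set i | p <= q i].
have cover_ST : n <= #|S| + #|T|.
  rewrite -[X in X <= _]card_ord -cardsT -cardsUI.
  apply: leq_trans (leq_addr _ _); apply/subset_leq_card.
  by apply/subsetP => i _; rewrite !inE leq_total.
have [S_big|S_small] := leqP n #|S|.*2.
- have [i0 Si0] : exists i0, i0 \in S by apply/card_gt0P; move: S_big; rewrite -muln2; lia.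
  have [i Si i_last] := @arg_maxnP _ i0 (mem S) q Si0.
  have between : {in S, forall j, minn (q j) p <= q i <= maxn (q j) p}.
    by move=> j Sj; have := i_last j Sj; move: Si Sj; rewrite !inE; lia.
  exists (nth set0 s (q i)) => //; apply: leq_trans (big_bag_between Si between).
  by rewrite leq_add2r half_le.
- have T_big : n <= #|T|.*2 by move: S_small; rewrite -!muln2; lia.
  have [i0 Ti0] : exists i0, i0 \in T by apply/card_gt0P; move: T_big; rewrite -muln2; lia.
  have [i Ti i_first] := @arg_minnP _ i0 (mem T) q Ti0.
  have between : {in T, forall j, minn (q j) p <= q i <= maxn (q j) p}.
    by move=> j Tj; have := i_first j Tj; move: Ti Tj; rewrite !inE; lia.
  exists (nth set0 s (q i)) => //; apply: leq_trans (big_bag_between Ti between).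
  by rewrite leq_add2r half_le.
Qed.

End LowerBound.

Lemma corona_pd_width_ge s : 0 < n ->
  path_decomposition corona s -> n + maxn 0 (m - n./2) - 1 <= pd_width s.
Proof.
move=> n_gt0 pd.
have core0 : inl (Ordinal n_gt0) \in core by rewrite inE.
have [p p_lt core_in_p] := pd_clique_sub_bag pd core0 core_clique.
have hair_in i : inl i \in hair i by rewrite inE.
have [q _ hair_in_q] :=
  fin_all_exists2 (fun i => pd_clique_sub_bag pd (hair_in i) (@hair_clique i)).
have [B Bs B_big] := big_bag_one_side pd core_in_p hair_in_q n_gt0.
have core_bag : n <= #|nth set0 s p|.
  rewrite card_set_sum -[X in X <= _]card_ord -cardsT.
  apply: leq_trans (leq_addr _ _); apply/subset_leq_card.
  by apply/subsetP => x _; rewrite inE; apply: (subsetP core_in_p); rewrite inE.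
have width_p : #|nth set0 s p|.-1 <= pd_width s.
  exact: card_bag_le_pd_width (mem_nth set0 p_lt).
have width_B : #|B|.-1 <= pd_width s by exact: card_bag_le_pd_width.
by move: B_big core_bag width_p width_B; rewrite -!subn1 -divn2; lia.
Qed.

Section UpperBound.
Let h := n./2.

Definition slot (x : nat) : nat := if x < h then x else x.+1.

Definition corona_bag (t : nat) : {set V} :=
  [set v : V | match v with
               | inl x => minn (slot x) h <= t <= maxn (slot x) h
               | inr (x, _) => t == slot x
               end].

Definition corona_pd : seq {set V} := mkseq corona_bag n.+1.

Lemma addnn_half_le : h + h <= n.
Proof. by rewrite /h -divn2; lia. Qed.

Lemma nth_corona_pd t : t <= n -> nth set0 corona_pd t = corona_bag t.
Proof. by move=> t_le; rewrite nth_mkseq. Qed.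

Lemma corona_bag_in t : t <= n -> corona_bag t \in corona_pd.
Proof. by move=> t_le; rewrite -nth_corona_pd // mem_nth // size_mkseq. Qed.

Lemma slot_le (x : 'I_n) : slot x <= n.
Proof. by have := ltn_ord x; rewrite /slot; case: ifP; lia. Qed.

Lemma corona_pdP : path_decomposition corona corona_pd.
Proof.
have h_le : h <= n by have := addnn_half_le; lia.
have hub x : inl x \in corona_bag h by rewrite inE; lia.
split.
- case=> [x|[x a]].
  + by exists (corona_bag h); rewrite ?hub ?corona_bag_in.
  + by exists (corona_bag (slot x)); rewrite ?corona_bag_in ?slot_le // inE.
- case=> [x|[x a]] [y|[y b]] //=.
  + by exists (corona_bag h); rewrite ?hub ?corona_bag_in.
  + move=> /eqP<-; exists (corona_bag (slot x)); rewrite ?corona_bag_in ?slot_le //.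
    by rewrite !inE eqxx andbT; lia.
  + move=> /eqP->; exists (corona_bag (slot x)); rewrite ?corona_bag_in ?slot_le //.
    by rewrite !inE eqxx; lia.
  + move=> /andP[/eqP<- _]; exists (corona_bag (slot x)).
      by rewrite corona_bag_in ?slot_le.
    by rewrite !inE eqxx.
- move=> v i j k ij jk; rewrite size_mkseq => k_lt.
  rewrite !nth_corona_pd; try lia.
  by case: v => [x|[x a]]; rewrite !inE; lia.
Qed.

Lemma card_corona_bag_inr t : #|[set y | inr y \in corona_bag t]| <= m.
Proof.
rewrite -[X in _ <= X]card_ord; apply: (leq_card_in snd) => -[x a] [y b].
rewrite !inE => /eqP tx /eqP ty /= ab; congr pair => //; apply: val_inj => /=.
by move: tx ty; rewrite /slot; case: ifP; case: ifP; lia.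
Qed.

Lemma card_corona_bag t : t <= n -> #|corona_bag t| <= n + (m - h).
Proof.
move=> t_le; have := addnn_half_le; rewrite card_set_sum.
set core_part := #|_|; set copy_part := #|_|.
have hair_le : copy_part <= m := card_corona_bag_inr t.
have [t_h|t_h|t_h] := ltngtP t h.
- suff : core_part <= t.+1 - 0 by lia.
  by apply: card_ord_range => x; rewrite !inE /slot; case: ifP; lia.
- suff : core_part <= n - t.-1 by lia.
  by apply: card_ord_range => x; rewrite !inE /slot; have := ltn_ord x; case: ifP; lia.
- have -> : copy_part = 0.
    apply/eqP; rewrite cards_eq0; apply/eqP/setP => -[x a].
    by rewrite !inE /slot t_h; case: ifP; lia.
  by rewrite addn0 (leq_trans _ (leq_addr _ _)) // /core_part -[X in _ <= X]card_ord max_card.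
Qed.

Lemma corona_pd_width : pd_width corona_pd <= n + maxn 0 (m - n./2) - 1.
Proof.
rewrite /pd_width max0n -subn1 leq_sub2r //.
apply/bigmax_leqP_seq => B /mapP[t]; rewrite mem_iota => /andP[_ t_lt] -> _.
exact: card_corona_bag.
Qed.

End UpperBound.

End Corona.

Theorem mainTheorem20 (n m : nat) : 2 <= n -> 1 <= m ->
  is_pathwidth (corona_rel (complete_rel n) (complete_rel m))
    (n + maxn 0 (m - n./2) - 1).
Proof.
move=> n_ge2 _; have n_gt0 : 0 < n by lia.
split=> [|s pd]; last exact: corona_pd_width_ge.
exists (corona_pd n m); first exact: corona_pdP.
by apply/eqP; rewrite eqn_leq corona_pd_width (corona_pd_width_ge n_gt0 (corona_pdP n m)).
Qed.
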